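(* Let $G$ be a countable discrete group acting by a topological partial action $\theta=\{\theta_g\colon Y_{g^{-1}}\to Y_g\}_{g\in G}$ on a compact space $Y$, and let $X$ be a nonempty compact space, with $\hat\theta$ the induced partial action on $C(X,Y)$. Then the following are equivalent: (i) $Y_g$ is clopen for all $g\in G$; (ii) the enveloping space $Y_G$ is Hausdorff; (iii) the enveloping space $C(X,Y)_G$ is Hausdorff.
   Context: A topological partial action of $G$ on $Y$ is a family of homeomorphisms $\theta_g\colon Y_{g^{-1}}\to Y_g$ between open subsets with $Y_e=Y$, $\theta_e=\mathrm{id}_Y$, $\theta_{g^{-1}}=\theta_g^{-1}$, $\theta_g\circ\theta_h$ a restriction of $\theta_{gh}$. $C(X,Y)$ has the compact-open topology; $\hat\theta$ has $C(X,Y)_g=\{f: f(X)\subset Y_g\}$ and $\hat\theta_g(f)=\theta_g\circ f$. For a topological partial action on $W$, the enveloping space is $W_G=(G\times W)/R$ with the quotient topology, where $(g,x)R(h,y)$ iff $x\in W_{g^{-1}h}$ and $\theta_{h^{-1}g}(x)=y$. *)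

From HB Require Import structures.
From mathcomp Require Import all_boot all_order all_algebra generic_quotient.
From mathcomp Require Import all_classical all_reals all_analysis.

Set Implicit Arguments.
Unset Strict Implicit.
Unset Printing Implicit Defensive.

Local Open Scope classical_set_scope.

Definition is_group (G : Type) (mul : G -> G -> G) (inv : G -> G) (e : G) : Prop :=
  [/\ (forall a b c, mul a (mul b c) = mul (mul a b) c),
      (forall a, mul e a = a /\ mul a e = a) &
      (forall a, mul (inv a) a = e /\ mul a (inv a) = e)].

(** Topological partial action theta = {theta_g : Y_{g^-1} -> Y_g} of G on Y.
    [D g] is the open set Y_g and [th g] is a total function Y -> Y whose
    restriction to Y_{g^-1} is theta_g (its values outside Y_{g^-1} are
    irrelevant). *)
Definition partial_action (G : Type) (mul : G -> G -> G) (inv : G -> G) (e : G)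
    (Y : topologicalType) (D : G -> set Y) (th : G -> Y -> Y) : Prop :=
  (forall g, open (D g)) /\
  D e = [set: Y] /\
  (forall y, th e y = y) /\
      (forall g y, D (inv g) y -> D g (th g y)) /\
      (forall g y, D (inv g) y -> th (inv g) (th g y) = y) /\
      (forall g, {within D (inv g), continuous (th g)}) /\
      (forall g h y, D (inv h) y -> D (inv g) (th h y) ->
         D (inv (mul g h)) y /\ th (mul g h) y = th g (th h y)).

Definition CO (X Y : topologicalType) : Type := continuousType X Y.
HB.instance Definition _ (X Y : topologicalType) := Choice.on (CO X Y).
HB.instance Definition _ (X Y : topologicalType) :=
  Topological.copy (CO X Y)
    (initial_topology (fun f : continuousType X Y => (f : {compact-open, X -> Y}))).

(** The induced partial action hat-theta on C(X,Y):
    C(X,Y)_g = {f | f(X) ⊂ Y_g} and hat-theta_g f = theta_g o f. *)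
Definition hatD (X Y : topologicalType) (G : Type) (D : G -> set Y) (g : G) :
  set (CO X Y) := [set f : CO X Y | forall x : X, D g (f x)].

Definition hatact (X Y : topologicalType) (G : Type) (th : G -> Y -> Y) (g : G)
    (f : CO X Y) : CO X Y :=
  match pselect (continuous (th g \o f)) with
  | left H => (mkcts H : continuousType X Y)
  | right _ => f
  end.

(** Enveloping space W_G = (G x W)/R with the quotient topology (G discrete),
    where (g,x) R (h,y) iff x \in W_{g^-1 h} and theta_{h^-1 g}(x) = y.
    Its points are the R-classes [set q | R p q]. *)
Section enveloping.
Context (G : countType) (mul : G -> G -> G) (inv : G -> G)
  (W : topologicalType) (D : G -> set W) (act : G -> W -> W).

Definition env_rel (p q : (discrete_topology G * W)%type) : Prop :=
  D (mul (inv p.1) q.1) p.2 /\ act (mul (inv q.1) p.1) p.2 = q.2.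

Definition env_classes : Type :=
  {A : set (discrete_topology G * W)%type | exists p, A = env_rel p}.

Definition env_pi (p : (discrete_topology G * W)%type) : env_classes :=
  exist _ (env_rel p) (ex_intro _ p erefl).

Definition env_repr (A : env_classes) : (discrete_topology G * W)%type :=
  proj1_sig (cid (proj2_sig A)).

Lemma env_reprK : cancel env_repr env_pi.
Proof.
move=> [A HA]; rewrite /env_pi /env_repr /=.
case: (cid HA) => p /= Ep; subst A.
by congr exist; exact: Prop_irrelevance.
Qed.

HB.instance Definition _ :=
  isQuotient.Build (discrete_topology G * W)%type env_classes env_reprK.

Definition enveloping_space : topologicalType := quotient_topology env_classes.

End enveloping.

From HB Require Import structures.
From mathcomp Require Import all_boot all_order all_algebra generic_quotient.
From mathcomp Require Import all_classical all_reals all_analysis.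

(** Write [g, w] for the class of (g, w) in the enveloping space W_G.  If every
    W_g is closed in a Hausdorff W, two distinct classes [g, y] and [h, z] are
    separated by images of open sets of W: either y lies in the open set
    W \ W_{g^-1 h}, or theta_{h^-1 g}(y) <> z and these two points are
    separated in W.  Conversely, if W_G is Hausdorff and y is a limit of points
    y' of Y_g, then [e, y'] = [g, theta_{g^-1}(y')], and a cluster point z of
    the theta_{g^-1}(y'), which exists since Y is compact, gives
    [e, y] = [g, z], i.e. y in Y_g.  For C(X,Y) the same argument is run along
    the constant maps, a continuous equivariant copy of Y when X is nonempty;
    and Y_g closed makes C(X,Y)_g an intersection of closed subbasic sets,
    while C(X,Y) inherits the Hausdorff property from Y. *)

Set Implicit Arguments.
Unset Strict Implicit.
Unset Printing Implicit Defensive.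

Local Open Scope classical_set_scope.
Local Open Scope quotient_scope.

Section Group.
Variables (G : Type) (mul : G -> G -> G) (inv : G -> G) (e : G).
Hypothesis grpG : is_group mul inv e.

Lemma grp_mulA a b c : mul a (mul b c) = mul (mul a b) c.
Proof. by case: grpG. Qed.

Lemma grp_mul1g a : mul e a = a.
Proof. by case: grpG => _ /(_ a) []. Qed.

Lemma grp_mulg1 a : mul a e = a.
Proof. by case: grpG => _ /(_ a) []. Qed.

Lemma grp_mulVg a : mul (inv a) a = e.
Proof. by case: grpG => _ _ /(_ a) []. Qed.

Lemma grp_mulgV a : mul a (inv a) = e.
Proof. by case: grpG => _ _ /(_ a) []. Qed.

Lemma grp_inv_uniq a b : mul a b = e -> inv a = b.
Proof. by move=> ab1; rewrite -[inv a]grp_mulg1 -ab1 grp_mulA grp_mulVg grp_mul1g. Qed.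

Lemma grp_invK a : inv (inv a) = a.
Proof. by apply: grp_inv_uniq; rewrite grp_mulVg. Qed.

Lemma grp_inv1 : inv e = e.
Proof. by apply: grp_inv_uniq; rewrite grp_mul1g. Qed.

Lemma grp_invM a b : inv (mul a b) = mul (inv b) (inv a).
Proof.
by apply: grp_inv_uniq; rewrite -grp_mulA [mul b _]grp_mulA grp_mulgV grp_mul1g grp_mulgV.
Qed.

Lemma grp_invVM a b : inv (mul (inv a) b) = mul (inv b) a.
Proof. by rewrite grp_invM grp_invK. Qed.

Lemma grp_mulVMV a b c : mul (mul (inv a) b) (mul (inv b) c) = mul (inv a) c.
Proof. by rewrite -grp_mulA [mul b _]grp_mulA grp_mulgV grp_mul1g. Qed.

End Group.

Section EnvelopingSpace.
Variables (G : countType) (mul : G -> G -> G) (inv : G -> G) (e : G).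
Variables (W : topologicalType) (D : G -> set W) (act : G -> W -> W).

(* Continuity of theta_g on the open set W_{g^-1} is stated through open
   preimages, the form in which it is checked for C(X,Y) below. *)
Record group_partial_action : Prop := {
  pa_group : is_group mul inv e;
  pa_open : forall g, open (D g);
  pa_dom1 : D e = [set: W];
  pa_act1 : forall w, act e w = w;
  pa_dom_act : forall g w, D (inv g) w -> D g (act g w);
  pa_actK : forall g w, D (inv g) w -> act (inv g) (act g w) = w;
  pa_open_preimage : forall g O, open O -> open (D (inv g) `&` act g @^-1` O);
  pa_actM : forall g h w, D (inv h) w -> D (inv g) (act h w) ->
    D (inv (mul g h)) w /\ act (mul g h) w = act g (act h w) }.

Lemma partial_action_group : is_group mul inv e ->
  partial_action mul inv e D act -> group_partial_action.
Proof.
move=> grpG [oD [D1 [act1 [Dact [actK [cact actM]]]]]].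
split=> // g O oO.
have := cact g; rewrite continuous_open_subspace // => /continuous_inP.
by move=> /(_ (oD (inv g))) /(_ O oO).
Qed.

Hypothesis paW : group_partial_action.
Let grpG := pa_group paW.

Notation R := (env_rel mul inv D act).
Notation WG := (enveloping_space mul inv D act).

Lemma env_rel_refl p : R p p.
Proof. by rewrite /env_rel (grp_mulVg grpG) // pa_dom1 // pa_act1. Qed.

Lemma env_rel_sym p q : R p q -> R q p.
Proof.
case: p q => g y [h z] [/= Dy <-]; split => /=.
  by apply: pa_dom_act; rewrite // (grp_invVM grpG).
by rewrite -(grp_invVM grpG) pa_actK // (grp_invVM grpG).
Qed.

Lemma env_rel_trans p q r : R p q -> R q r -> R p r.
Proof.
case: p q r => g1 y1 [g2 _] [g3 _] [/= D1 <-] [/= D2 <-].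
have [] := pa_actM paW (g := mul (inv g3) g2) (h := mul (inv g2) g1) (w := y1);
  rewrite ?(grp_invVM grpG) //.
rewrite (grp_mulVMV grpG) (grp_invVM grpG) => D3 <-.
by split.
Qed.

Lemma env_piP p q : \pi_WG p = \pi_WG q <-> R p q.
Proof.
rewrite !unlock; change (env_pi mul inv D act p = env_pi mul inv D act q <-> R p q).
split=> [[->]|Rpq]; first exact: env_rel_refl.
apply: eq_sig_hprop => [? ? ?|]; first exact: Prop_irrelevance.
apply/funext => r; apply/propext; split; last exact: env_rel_trans.
exact/env_rel_trans/env_rel_sym.
Qed.

Definition env_image (g : G) (U : set W) : set WG := [set \pi_WG (g, u) | u in U].

Lemma open_env_image g U : open U -> open (env_image g U).
Proof.
move=> oU; change (open (\pi_WG @^-1` env_image g U)).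
rewrite openE => -[m w] [u Uu /env_piP [/= Du act_u]].
set k := mul (inv m) g in Du act_u *.
have Dk : D (inv k) u by rewrite (grp_invVM grpG).
have oV := pa_open_preimage paW (inv k) oU; rewrite (grp_invK grpG) in oV.
have Vw : (D k `&` act (inv k) @^-1` U) w.
  by rewrite -act_u; split; [exact: (pa_dom_act paW Dk)|rewrite /= (pa_actK paW Dk)].
change (nbhs (m, w) (\pi_WG @^-1` env_image g U)).
exists ([set m], D k `&` act (inv k) @^-1` U); first split.
- exact: discrete_set1.
- exact: open_nbhs_nbhs.
move=> [_ w'] /= [-> [Dw' Uw']]; exists (act (inv k) w') => //.
have Dw'' : D (inv (inv k)) w' by rewrite (grp_invK grpG).
apply/env_piP; split => /=.
  by rewrite -(grp_invVM grpG); exact: (pa_dom_act paW Dw'').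
by have := pa_actK paW Dw''; rewrite (grp_invK grpG).
Qed.

Lemma env_images_disjoint g h U V :
  (forall u v, U u -> V v -> ~ R (g, u) (h, v)) ->
  env_image g U `&` env_image h V = set0.
Proof.
move=> nR; apply/seteqP; split => // _ [[u Uu <-] [v Vv /esym/env_piP]].
exact: nR.
Qed.

Lemma hausdorff_enveloping :
  hausdorff_space W -> (forall g, closed (D g)) -> hausdorff_space WG.
Proof.
move=> hW cD; rewrite open_hausdorff => a b.
rewrite -[a]reprK -[b]reprK; case: (repr a) (repr b) => g y [h z] /eqP ab.
have nRyz : ~ R (g, y) (h, z) by move/env_piP.
have [Dy|nDy] := pselect (D (mul (inv g) h) y); last first.
  exists (env_image g (~` D (mul (inv g) h)), env_image h setT).
    by rewrite !inE; split; [exists y|exists z].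
  split; [exact/open_env_image/closed_openC|exact/open_env_image/openT|].
  by apply/eqP/env_images_disjoint => u v Du _ [].
set k := mul (inv h) g.
have actyz : act k y != z by apply/eqP => actyz; apply: nRyz.
move: hW; rewrite open_hausdorff => /(_ _ _ actyz) [[A B] /=].
rewrite !inE => -[Ay Bz] [oA oB AB0].
exists (env_image g (D (inv k) `&` act k @^-1` A), env_image h B).
  by rewrite !inE; split; [exists y; first split; rewrite ?(grp_invVM grpG)|exists z].
split; [exact/open_env_image/(pa_open_preimage paW)|exact: open_env_image|].
apply/eqP/env_images_disjoint => u v [_ Au] Bv [_ /= actuv].
have ABv : (A `&` B) v by split => //; rewrite -actuv.
by move: ABv; rewrite AB0.
Qed.

Lemma continuous_env_pi_pair (Z : topologicalType) (c : Z -> W) g :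
  continuous c -> continuous (fun z => \pi_WG (g, c z)).
Proof.
move=> cc z A nA.
have [[P1 P2] /= [P1g P2cz] P12A] :=
  @pi_continuous _ (env_classes mul inv D act) (g, c z) A nA.
have P2c : nbhs z (c @^-1` P2) := cc z P2 P2cz.
apply: (filterS _ P2c) => z' P2z'.
by apply: (P12A (g, c z')); split; first exact: nbhs_singleton.
Qed.

Lemma closed_dom_preimage (Z : topologicalType) (c : Z -> W) (t : Z -> Z) g :
  compact [set: Z] -> hausdorff_space WG -> continuous c ->
  {in c @^-1` D g, forall z, act (inv g) (c z) = c (t z)} ->
  closed (c @^-1` D g).
Proof.
move=> cptZ hWG cc act_c y clDy.
pose F := within (c @^-1` D g) (nbhs y).
have PF : ProperFilter F by exact: within_nbhs_proper.
have [z [_ clz]] := cptZ (t @ F) _ filterT.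
pose phi z' := \pi_WG (e, c z'); pose psi z' := \pi_WG (g, c z').
have phi_psi y' : D g (c y') -> phi y' = psi (t y').
  move=> Dy'; apply/env_piP; split => /=.
    by rewrite (grp_inv1 grpG) (grp_mul1g grpG).
  by rewrite (grp_mulg1 grpG) act_c // inE.
have : phi y = psi z.
  apply: hWG => A B Ay Bz.
  have phiA : nbhs y (phi @^-1` A) := continuous_env_pi_pair (g := e) cc Ay.
  have psiB : nbhs z (psi @^-1` B) := continuous_env_pi_pair (g := g) cc Bz.
  have FA : F (c @^-1` D g `&` phi @^-1` A) by apply: (filterS _ phiA) => y' ? ?.
  have tFA : (t @ F) (t @` (c @^-1` D g `&` phi @^-1` A)).
    by apply: (filterS _ FA) => y' ?; exists y'.
  have [_ [[y' [Dy' Ay'] <-] Bty']] := clz _ _ tFA psiB.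
  by exists (phi y'); split; rewrite // phi_psi.
case/env_piP => /=.
by rewrite (grp_inv1 grpG) (grp_mul1g grpG).
Qed.
End EnvelopingSpace.

Section CompactOpen.
Variables X Y : topologicalType.

Lemma open_CO_preimage (A : set {compact-open, X -> Y}) :
  open A -> open [set f : CO X Y | A f].
Proof. by move=> oA; exists A. Qed.

Lemma open_CO_subbasic (K : set X) (O : set Y) :
  compact K -> open O -> open [set f : CO X Y | f @` K `<=` O].
Proof. by move=> cK oO; exact: open_CO_preimage (compact_open_open cK oO). Qed.

Lemma hausdorff_CO : hausdorff_space Y -> hausdorff_space (CO X Y).
Proof.
move=> hY; rewrite open_hausdorff => f f' /eqP ff'.
have [x fx] : exists x, f x != f' x.
  apply: contrapT => nfx; apply/ff'/continuousEP => x.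
  by apply/eqP/negPn/negP => fx'; apply: nfx; exists x.
move: hY; rewrite open_hausdorff => /(_ _ _ fx) [[A B] /=].
rewrite !inE => -[Ax Bx] [oA oB AB0].
exists ([set g : CO X Y | g @` [set x] `<=` A],
        [set g : CO X Y | g @` [set x] `<=` B]).
  by rewrite /= !inE; split => _ [_ -> <-].
split; first exact: (open_CO_subbasic (@compact_set1 _ x) oA).
  exact: (open_CO_subbasic (@compact_set1 _ x) oB).
apply/eqP/seteqP; split => // g [gA gB].
have : (A `&` B) (g x) by split; [apply: gA|apply: gB]; exists x.
by rewrite AB0.
Qed.

Definition cst_CO (y : Y) : CO X Y := cst y.

Lemma continuous_cst_CO : continuous cst_CO.
Proof.
apply: continuous_comp_initial => y; apply/compact_open_cvgP => K O _ oO KyO.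
change (nbhs y [set y' | @cst X Y y' @` K `<=` O]).
have [[x Kx]|K0] := pselect (exists x, K x).
  have Oy : O y by apply: KyO; exists x.
  by apply: (filterS _ (open_nbhs_nbhs (conj oO Oy))) => y' Oy' _ [? _ <-].
by apply: nearW => y' z [x Kx]; case: K0; exists x.
Qed.

Lemma continuous_postcomp (S : set Y) (h : Y -> Y) :
  (forall O, open O -> open (S `&` h @^-1` O)) ->
  {in [set phi : {compact-open, X -> Y} | phi @` [set: X] `<=` S],
    continuous (fun phi : {compact-open, X -> Y} => h \o phi : {compact-open, X -> Y})}.
Proof.
move=> ohS phi /set_mem phiS.
apply/compact_open_cvgP; first exact/fmap_filter/nbhs_filter.
move=> K O cK oO KphiO.
have nK : nbhs phi [set psi : {compact-open, X -> Y} | psi @` K `<=` S `&` h @^-1` O].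
  apply: open_nbhs_nbhs; split; first exact: compact_open_open cK (ohS O oO).
  by move=> _ [x Kx <-]; split; [apply: phiS; exists x|apply: KphiO; exists x].
apply: (filterS _ nK) => psi KpsiO _ [x Kx <-].
by have [] := KpsiO (psi x) (ex_intro2 _ _ x Kx erefl).
Qed.

End CompactOpen.

Section InducedAction.
Variables (G : countType) (mul : G -> G -> G) (inv : G -> G) (e : G).
Variables (X Y : topologicalType) (D : G -> set Y) (th : G -> Y -> Y).
Hypothesis paY : group_partial_action mul inv e D th.
Let grpG := pa_group paY.

Notation hD := (@hatD X Y G D).
Notation hth := (@hatact X Y G th).

Lemma continuous_act_comp g (f : CO X Y) : hD (inv g) f -> continuous (th g \o f).
Proof.
move=> Df x A nA; change (nbhs x (f @^-1` (th g @^-1` A))).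
have oDA := pa_open_preimage paY g (@open_interior _ A).
have nDA : nbhs (f x) (D (inv g) `&` th g @^-1` interior A).
  by apply: open_nbhs_nbhs; split => //; split => //; exact: Df.
apply: (filterS _ (@cts_fun _ _ f x _ nDA)) => x' [_].
exact: interior_subset.
Qed.

Lemma hatactE g (f : CO X Y) : hD (inv g) f -> hth g f = th g \o f :> (X -> Y).
Proof. by move/continuous_act_comp; rewrite /hatact; case: pselect. Qed.

Lemma hatact_cst g y : D (inv g) y -> hth g (cst_CO X y) = cst_CO X (th g y).
Proof. by move=> Dy; apply/continuousEP => x; rewrite hatactE. Qed.

Lemma closed_hatD g : closed (D g) -> closed (hD g).
Proof.
move=> cD; rewrite -[hD g]setCK; apply: open_closedC.
have -> : ~` hD g = \bigcup_x [set f : CO X Y | f @` [set x] `<=` ~` D g].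
  apply/seteqP; split => f /=.
    by move=> /existsNP [x nDfx]; exists x => // _ [_ -> <-].
  by move=> [x _ nDfx] Df; apply: (nDfx (f x)) => //; exists x.
apply: bigcup_open => x _.
exact: (open_CO_subbasic (@compact_set1 _ x) (closed_openC cD)).
Qed.

Hypothesis cptX : compact [set: X].

Lemma open_hatD g : open (hD g).
Proof.
have -> : hD g = [set f : CO X Y | f @` [set: X] `<=` D g].
  by apply/seteqP; split => f Df; [move=> _ [x _ <-]|move=> x; apply: Df; exists x].
exact: (open_CO_subbasic cptX (pa_open paY g)).
Qed.

Lemma open_hatact_preimage g O : open O -> open (hD (inv g) `&` hth g @^-1` O).
Proof.
case=> A oA <-.
pose into := [set phi : {compact-open, X -> Y} | phi @` [set: X] `<=` D (inv g)].
pose thg phi : {compact-open, X -> Y} := th g \o phi.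
have oA' : open (into `&` thg @^-1` A).
  have ointo : open into by exact: compact_open_open cptX (pa_open paY _).
  have := continuous_postcomp (X := X) (pa_open_preimage paY g).
  by move/(continuous_inP _ ointo); apply.
suff -> : hD (inv g) `&` hth g @^-1` [set f | A f] =
    [set f : CO X Y | (into `&` thg @^-1` A) f].
  exact: open_CO_preimage.
apply/seteqP; split => f /= [Df Af].
  by split; [move=> _ [x _ <-]; exact: Df|rewrite /thg -hatactE].
have Df' : hD (inv g) f by move=> x; apply: Df; exists x.
by split; rewrite // hatactE.
Qed.

Lemma hat_partial_action : group_partial_action mul inv e hD hth.
Proof.
have inv_hD g f : hD (inv g) f -> hD (inv (inv g)) (hth g f).
  by move=> Df x; rewrite (grp_invK grpG) hatactE //; exact: (pa_dom_act paY (Df x)).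
split => //.
- exact: open_hatD.
- by apply/seteqP; split => // f _ x; rewrite (pa_dom1 paY).
- move=> f; apply/continuousEP => x.
  have Df : hD (inv e) f by move=> y; rewrite (grp_inv1 grpG) (pa_dom1 paY).
  by rewrite hatactE //= (pa_act1 paY).
- by move=> g f /inv_hD; rewrite (grp_invK grpG).
- move=> g f Df; apply/continuousEP => x.
  by rewrite !hatactE //= ?(pa_actK paY (Df x)) //; exact: inv_hD.
- exact: open_hatact_preimage.
- move=> g h f Df Dhf.
  have Dhfx x : D (inv g) (th h (f x)) by have := Dhf x; rewrite hatactE.
  have Dghf : hD (inv (mul g h)) f by move=> x; have [] := pa_actM paY (Df x) (Dhfx x).
  split => //; apply/continuousEP => x.
  by rewrite !hatactE //=; have [] := pa_actM paY (Df x) (Dhfx x).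
Qed.

End InducedAction.

Theorem corollary3p6 (G : countType) (mul : G -> G -> G) (inv : G -> G) (e : G)
  (Y X : topologicalType) (D : G -> set Y) (th : G -> Y -> Y) :
  is_group mul inv e ->
  partial_action mul inv e D th ->
  compact [set: Y] -> hausdorff_space Y ->
  compact [set: X] -> hausdorff_space X -> (exists x : X, True) ->
  [<-> (forall g, clopen (D g));
       hausdorff_space (enveloping_space mul inv D th);
       hausdorff_space
         (enveloping_space mul inv (@hatD X Y G D) (@hatact X Y G th))].
Proof.
move=> grpG pa cptY hY cptX _ [x0 _].
have paY := partial_action_group grpG pa.
have paC := hat_partial_action paY cptX.
have cst_hatD g : @cst_CO X Y @^-1` hatD (X := X) D g = D g.
  by apply/seteqP; split => [y /(_ x0)|y Dy x].
tfae.
- by move=> clD; apply: (hausdorff_enveloping paY hY) => g; case: (clD g).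
- move=> hYG; apply: (hausdorff_enveloping paC (hausdorff_CO (X := X) hY)) => g.
  apply: closed_hatD.
  by apply: (closed_dom_preimage paY (c := id) (t := th (inv g))) => // y; exact: cvg_id.
- move=> hCG g; split; first exact: (pa_open paY).
  rewrite -cst_hatD; apply: (closed_dom_preimage paC (t := th (inv g))) => //.
    exact: continuous_cst_CO.
  move=> y; rewrite inE cst_hatD => Dy; apply: (hatact_cst X paY).
  by rewrite (grp_invK grpG).
Qed.
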